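(* Let $f_1,\dots,f_m:\mathbb R^n\to\mathbb R$ be continuously differentiable with $\nabla f_j$ being $L_j$-Lipschitz, and set $L=\max_j L_j$. Let $C_1>0$, $\tau>0$ and $x,y\in\mathbb R^n$ with $\|x\|+\|y\|\le C_1$. Then $$\Big\|\mathrm{proj}_{C(y)}\Big(\frac{y-x}{\tau}\Big)-\mathrm{proj}_{C(x)}\Big(\frac{y-x}{\tau}\Big)\Big\|\le\sqrt{C_2L}\,\|x-y\|^{1/2}+\sqrt{\frac{3L}{\tau}}\,\|x-y\|,$$ where $C_2:=LC_1+2\max_{1\le j\le m}\|\nabla f_j(0)\|$.
   Context: $C(x)=\mathrm{conv}\{\nabla f_1(x),\dots,\nabla f_m(x)\}$, and $\mathrm{proj}_C(v)$ is the Euclidean projection of $v$ onto the closed convex set $C$. (In the paper this is applied to the iterates $x_k,y_k$ of a multiobjective accelerated proximal gradient method, which are bounded by a constant $C_1$.) *)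

From HB Require Import structures.
From mathcomp Require Import all_boot all_order all_algebra.
From mathcomp Require Import all_classical all_reals all_analysis.
Set Implicit Arguments. Unset Strict Implicit. Unset Printing Implicit Defensive.
Import Order.TTheory GRing.Theory Num.Theory.
Import numFieldNormedType.Exports.
Local Open Scope classical_set_scope.
Local Open Scope ring_scope.

Section Defs.
Variables (R : realType) (n : nat).

Definition dotv (u v : 'rV[R]_n) : R := \sum_(i < n) u ord0 i * v ord0 i.
Definition enorm (u : 'rV[R]_n) : R := Num.sqrt (dotv u u).

Definition convhull (m : nat) (a : 'I_m -> 'rV[R]_n) : set 'rV[R]_n :=
  [set p | exists lam : 'I_m -> R, (forall j, 0 <= lam j) /\
           \sum_(j < m) lam j = 1 /\ p = \sum_(j < m) lam j *: a j].

(* Euclidean projection of v onto a set C: a point of C at minimal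
   Euclidean distance from v (chosen by xget; unique for closed convex
   nonempty C). *)
Definition is_proj (C : set 'rV[R]_n) (v p : 'rV[R]_n) : Prop :=
  C p /\ forall q, C q -> enorm (v - p) <= enorm (v - q).
Definition projC (C : set 'rV[R]_n) (v : 'rV[R]_n) : 'rV[R]_n :=
  xget 0 [set p | is_proj C v p].

Definition is_gradient (f : 'rV[R]_n -> R) (g : 'rV[R]_n -> 'rV[R]_n) : Prop :=
  forall x, differentiable f x /\
    ('d f x : 'rV[R]_n -> R) = (fun v => dotv (g x) v).

Definition lipschitz_on_Rn (g : 'rV[R]_n -> 'rV[R]_n) (K : R) : Prop :=
  forall x y, enorm (g x - g y) <= K * enorm (x - y).

End Defs.

(* Let P, Q be the projections of w onto C(y), C(x), written with barycentric
   weights lam, mu. Moving the weights to the other family gives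
   P' = sum lam_j g_j(x) in C(x) and Q' = sum mu_j g_j(y) in C(y), each within
   L |x - y| of P, resp. Q. The variational inequalities <w - P, Q' - P> <= 0
   and <w - Q, P' - Q> <= 0 then yield
     |P - Q|^2 = <w - P, Q - P> + <w - Q, P - Q>
              <= L |x - y| (|w - P| + |w - Q|),
   and |w - P| + |w - Q| <= 2 |x - y| / tau + C2 by the linear growth of the
   g_j. *)

From HB Require Import structures.
From mathcomp Require Import all_boot all_order all_algebra.
From mathcomp Require Import all_classical all_reals all_analysis.
From mathcomp Require Import ring lra.

Set Implicit Arguments.
Unset Strict Implicit.
Unset Printing Implicit Defensive.
Import Order.TTheory GRing.Theory Num.Theory.
Import numFieldNormedType.Exports.
Local Open Scope classical_set_scope.
Local Open Scope ring_scope.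

Section EuclideanNorm.
Variables (R : realType) (n : nat).
Implicit Types (u v z : 'rV[R]_n).

Lemma dotvC u v : dotv u v = dotv v u.
Proof. by apply: eq_bigr => i _; rewrite mulrC. Qed.

Lemma dotvDl u v z : dotv (u + v) z = dotv u z + dotv v z.
Proof. by rewrite /dotv -big_split; apply: eq_bigr => i _; rewrite mxE mulrDl. Qed.

Lemma dotvZl (a : R) u v : dotv (a *: u) v = a * dotv u v.
Proof. by rewrite /dotv mulr_sumr; apply: eq_bigr => i _; rewrite mxE mulrA. Qed.

Lemma dotvBl u v z : dotv (u - v) z = dotv u z - dotv v z.
Proof. by rewrite dotvDl -scaleN1r dotvZl mulN1r. Qed.

Lemma dotvDr u v z : dotv z (u + v) = dotv z u + dotv z v.
Proof. by rewrite dotvC dotvDl !(dotvC z). Qed.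

Lemma dotvBr u v z : dotv z (u - v) = dotv z u - dotv z v.
Proof. by rewrite dotvC dotvBl !(dotvC z). Qed.

Lemma dotvZr (a : R) u v : dotv v (a *: u) = a * dotv v u.
Proof. by rewrite dotvC dotvZl dotvC. Qed.

Lemma dotv_subZ (t : R) u v :
  dotv (u - t *: v) (u - t *: v) = dotv u u - 2 * t * dotv u v + t ^+ 2 * dotv v v.
Proof. by rewrite !(dotvBl, dotvBr, dotvZl, dotvZr) (dotvC v u); ring. Qed.

Lemma dotv0l v : dotv 0 v = 0.
Proof. by rewrite -(scale0r (0 : 'rV[R]_n)) dotvZl mul0r. Qed.

Lemma dotv_ge0 u : 0 <= dotv u u.
Proof. by apply: sumr_ge0 => i _; rewrite -expr2 sqr_ge0. Qed.

Lemma dotv_self_eq0 u : dotv u u = 0 -> u = 0.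
Proof.
move=> /eqP; rewrite psumr_eq0 => [/allP u0|i _]; last by rewrite -expr2 sqr_ge0.
apply/rowP => i; rewrite mxE; apply/eqP.
by have := u0 i (mem_index_enum _); rewrite mulf_eq0 orbb.
Qed.

Lemma enorm_ge0 u : 0 <= enorm u.
Proof. exact: sqrtr_ge0. Qed.

Lemma enorm_gt0 u : u != 0 -> 0 < enorm u.
Proof.
apply: contraNT; rewrite -leNgt => u_le0.
have : enorm u == 0 by rewrite eq_le u_le0 enorm_ge0.
by rewrite sqrtr_eq0 => d_le0; apply/eqP/dotv_self_eq0/eqP; rewrite eq_le d_le0 dotv_ge0.
Qed.

Lemma enorm_sqr u : enorm u ^+ 2 = dotv u u.
Proof. by rewrite sqr_sqrtr // dotv_ge0. Qed.

Lemma enorm_le u (c : R) : 0 <= c -> dotv u u <= c ^+ 2 -> enorm u <= c.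
Proof. by move=> c0 h; rewrite -(ger0_norm c0) -sqrtr_sqr ler_sqrt // sqr_ge0. Qed.

Lemma dotv_le_enorm u v : dotv u v <= enorm u * enorm v.
Proof.
set a := enorm u; set b := enorm v.
have [u0|unz] := eqVneq u 0; first by rewrite u0 dotv0l mulr_ge0 ?enorm_ge0.
have [v0|vnz] := eqVneq v 0; first by rewrite v0 dotvC dotv0l mulr_ge0 ?enorm_ge0.
have ab_gt0 : 0 < a * b by rewrite mulr_gt0 ?enorm_gt0.
(* |b u - a v|^2 = 2 a b (a b - <u, v>) *)
have := dotv_ge0 (b *: u - a *: v).
rewrite !(dotvBl, dotvBr, dotvZl, dotvZr) (dotvC v u) -!enorm_sqr -/a -/b => h.
have : 0 <= (2 * (a * b)) * (a * b - dotv u v) by nra.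
by rewrite pmulr_rge0 ?subr_ge0 // mulr_gt0.
Qed.

Lemma enormD u v : enorm (u + v) <= enorm u + enorm v.
Proof.
apply: enorm_le; first by rewrite addr_ge0 // enorm_ge0.
rewrite !(dotvDl, dotvDr) (dotvC v u) -!enorm_sqr.
by have := dotv_le_enorm u v; nra.
Qed.

Lemma enormZ (a : R) u : enorm (a *: u) = `|a| * enorm u.
Proof. by rewrite /enorm dotvZl dotvZr mulrA -expr2 sqrtrM ?sqr_ge0 // sqrtr_sqr. Qed.

Lemma enormN u : enorm (- u) = enorm u.
Proof. by rewrite -scaleN1r enormZ normrN normr1 mul1r. Qed.

Lemma enormB u v : enorm (u - v) = enorm (v - u).
Proof. by rewrite -enormN opprB. Qed.

Lemma enormB_le u v : enorm (u - v) <= enorm u + enorm v.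
Proof. by rewrite -(enormN v) enormD. Qed.

Lemma enorm_sum m (F : 'I_m -> 'rV[R]_n) :
  enorm (\sum_(j < m) F j) <= \sum_(j < m) enorm (F j).
Proof.
apply: (big_ind2 (fun u r => enorm u <= r)) => //.
  by rewrite -(scale0r (0 : 'rV[R]_n)) enormZ normr0 mul0r.
by move=> u r v s hu hv; apply: le_trans (enormD _ _) (lerD hu hv).
Qed.

Lemma lipschitz_enorm_le (h : 'rV[R]_n -> 'rV[R]_n) (K : R) z :
  lipschitz_on_Rn h K -> enorm (h z) <= enorm (h 0) + K * enorm z.
Proof.
move=> hK; rewrite -(subrK (h 0) (h z)) addrC.
by apply: le_trans (enormD _ _) _; rewrite lerD2l -[in X in _ <= X](subr0 z).
Qed.

End EuclideanNorm.

Section ConvexHull.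
Variables (R : realType) (n m : nat).
Implicit Types (a b : 'I_m -> 'rV[R]_n) (w p q : 'rV[R]_n).

Lemma convhull_enorm_le a (B : R) p :
  (forall j, enorm (a j) <= B) -> convhull a p -> enorm p <= B.
Proof.
move=> aB [lam [lam_ge0 [lam_sum1 ->]]].
apply: le_trans (enorm_sum _) _.
rewrite -[B]mul1r -lam_sum1 mulr_suml; apply: ler_sum => j _.
by rewrite enormZ ger0_norm // ler_wpM2l.
Qed.

Lemma convhull_segment a p q (t : R) :
  0 <= t <= 1 -> convhull a p -> convhull a q -> convhull a (p + t *: (q - p)).
Proof.
move=> /andP[t0 t1] [lam [lam0 [lam1 ->]]] [mu [mu0 [mu1 ->]]].
exists (fun j => (1 - t) * lam j + t * mu j); split.
  by move=> j; rewrite addr_ge0 // mulr_ge0 // subr_ge0.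
split; first by rewrite big_split /= -!mulr_sumr lam1 mu1 !mulr1 subrK.
rewrite scalerBr !scaler_sumr -sumrB -!big_split /=; apply: eq_bigr => j _.
by rewrite !scalerA scalerDl mulrBl mul1r scalerBl [RHS]addrAC -addrA.
Qed.

Lemma convhull_transfer a b (d : R) p :
  (forall j, enorm (a j - b j) <= d) -> convhull b p ->
  exists2 q, convhull a q & enorm (p - q) <= d.
Proof.
move=> ab [lam [lam0 [lam1 ->]]].
exists (\sum_(j < m) lam j *: a j); first by exists lam.
apply: (@convhull_enorm_le (fun j => b j - a j)); first by move=> j; rewrite enormB.
by exists lam; do 2 split => //; rewrite -sumrB; apply: eq_bigr => j _; rewrite scalerBr.
Qed.

End ConvexHull.

Section Projection.
Variables (R : realType) (n : nat).
Implicit Types (w p q : 'rV[R]_n).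

Lemma is_proj_obtuse (C : set 'rV[R]_n) w p q :
  (forall p q (t : R), 0 <= t <= 1 -> C p -> C q -> C (p + t *: (q - p))) ->
  is_proj C w p -> C q -> dotv (w - p) (q - p) <= 0.
Proof.
move=> C_convex [Cp p_min] Cq.
set u := w - p; set v := q - p; set d := dotv u v; set s := dotv v v.
have small_t t : 0 < t <= 1 -> 2 * d <= t * s.
  move=> /andP[t0 t1].
  have t01 : 0 <= t <= 1 by rewrite ltW.
  have := p_min _ (C_convex _ _ t t01 Cp Cq).
  rewrite /enorm ler_sqrt ?dotv_ge0 // opprD addrA -/u -/v.
  rewrite dotv_subZ -/d -/s => h.
  have : 0 <= t * (t * s - 2 * d) by nra.
  by rewrite pmulr_rge0 // subr_ge0.
rewrite leNgt; apply/negP => d_gt0.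
have s_ge0 : 0 <= s by apply: dotv_ge0.
have ds_gt0 : 0 < d + s by rewrite ltr_wpDr.
(* t = d / (d + s) gives t * s < d, contradicting [small_t] *)
have := small_t (d / (d + s)).
rewrite divr_gt0 //= ler_pdivrMr // mul1r lerDl s_ge0 => /(_ isT).
by rewrite mulrAC ler_pdivlMr //; nra.
Qed.

Lemma is_proj_convhull_stable m (a b : 'I_m -> 'rV[R]_n) (d : R) w p q :
  (forall j, enorm (a j - b j) <= d) ->
  is_proj (convhull b) w p -> is_proj (convhull a) w q ->
  dotv (p - q) (p - q) <= d * (enorm (w - p) + enorm (w - q)).
Proof.
move=> ab hp hq.
have ba j : enorm (b j - a j) <= d by rewrite enormB.
have [p' Cp' pp'] := convhull_transfer ab hp.1.
have [q' Cq' qq'] := convhull_transfer ba hq.1.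
have obtuse_p := is_proj_obtuse (@convhull_segment _ _ _ b) hp Cq'.
have obtuse_q := is_proj_obtuse (@convhull_segment _ _ _ a) hq Cp'.
have -> : dotv (p - q) (p - q) = dotv (w - p) (q - p) + dotv (w - q) (p - q).
  by rewrite !(dotvBl, dotvBr); ring.
have -> : q - p = (q' - p) + (q - q') by rewrite [q' - p + _]addrC addrA subrK.
have -> : p - q = (p' - q) + (p - p') by rewrite [p' - q + _]addrC addrA subrK.
rewrite (dotvDr (q' - p)) (dotvDr (p' - q)) mulrDr.
have bound_p : dotv (w - p) (q - q') <= d * enorm (w - p).
  by rewrite mulrC; apply: le_trans (dotv_le_enorm _ _) (ler_wpM2l (enorm_ge0 _) qq').
have bound_q : dotv (w - q) (p - p') <= d * enorm (w - q).
  by rewrite mulrC; apply: le_trans (dotv_le_enorm _ _) (ler_wpM2l (enorm_ge0 _) pp').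
lra.
Qed.

End Projection.

Lemma continuous_sum (K : numFieldType) (T : topologicalType) (V : normedModType K)
    (I : Type) (r : seq I) (F : I -> T -> V) :
  (forall i, continuous (F i)) -> continuous (fun x => \sum_(i <- r) F i x).
Proof.
move=> F_cont x; elim: r => [|i r IHr].
  by under eq_fun do rewrite big_nil; apply: cst_continuous.
under eq_fun do rewrite big_cons.
exact: continuousD (F_cont i x) IHr.
Qed.

Lemma dotv_self_continuous (R : realType) (n : nat) :
  continuous (fun u : 'rV[R]_n => dotv u u).
Proof.
by apply: continuous_sum => i u; apply: continuousM; apply: coord_continuous.
Qed.

Section ProjectionExists.
Variables (R : realType) (n m : nat).

Definition simplex : set 'rV[R]_m :=
  [set v | (forall j, 0 <= v ord0 j) /\ \sum_(j < m) v ord0 j = 1].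

Lemma simplex_compact : compact simplex.
Proof.
pose box := [set v : 'rV[R]_m | forall j, `[0, 1]%classic (v ord0 j)].
pose sum1 := [set v : 'rV[R]_m | \sum_(j < m) v ord0 j = 1].
have -> : simplex = box `&` sum1.
  apply/seteqP; split => v /= [v_ge0 v_sum1]; split => // j.
    rewrite /= in_itv /= v_ge0 -v_sum1 (bigD1 j) //= lerDl.
    by apply: sumr_ge0 => i _.
  by have := v_ge0 j; rewrite /= in_itv /= => /andP[].
have box_compact : compact box.
  by apply: (@rV_compact _ _ (fun=> `[(0 : R), 1]%classic)) => _; apply: segment_compact.
apply: (subclosed_compact _ box_compact); last by apply: subIsetl.
apply: closedI; first exact: compact_closed box_compact.
apply: (@preimage_closed _ _ (fun v : 'rV[R]_m => \sum_(j < m) v ord0 j) [set 1]).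
  by move=> v _; apply: continuous_sum => j; apply: coord_continuous.
exact: closed_eq.
Qed.

Lemma simplex_neq0 : (0 < m)%N -> simplex !=set0.
Proof.
move=> m_gt0; pose j0 : 'I_m := Ordinal m_gt0.
exists (\row_j (j == j0)%:R); split => [j|]; first by rewrite mxE ler0n.
under eq_bigr do rewrite mxE.
by rewrite (bigD1 j0) //= big1 ?addr0 // => j /negbTE ->.
Qed.

Lemma convhull_simplex (a : 'I_m -> 'rV[R]_n) p :
  convhull a p <-> exists2 v, simplex v & p = \sum_(j < m) v ord0 j *: a j.
Proof.
split => [[lam [lam_ge0 [lam_sum1 ->]]]|[v [v_ge0 v_sum1] ->]].
  exists (\row_j lam j); last by apply: eq_bigr => j _; rewrite mxE.
  by split=> [j|]; rewrite ?mxE //; under eq_bigr do rewrite mxE.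
by exists (fun j => v ord0 j).
Qed.

Lemma is_proj_convhull_exists (a : 'I_m -> 'rV[R]_n) (w : 'rV[R]_n) :
  (0 < m)%N -> exists p, is_proj (convhull a) w p.
Proof.
move=> m_gt0.
pose comb (v : 'rV[R]_m) := \sum_(j < m) v ord0 j *: a j.
have comb_cont : continuous comb.
  by apply: continuous_sum => j u; apply: continuousZr_tmp; apply: coord_continuous.
pose dist2 (v : 'rV[R]_m) := dotv (w - comb v) (w - comb v).
have dist2_cont : continuous dist2.
  move=> v; apply: (@continuous_comp _ _ _ (fun v => w - comb v) (fun u => dotv u u)).
    by apply: continuousB; [exact: cst_continuous | exact: comb_cont].
  exact: dotv_self_continuous.
have [c c_simplex c_min] := compact_EVT_min (simplex_neq0 m_gt0) simplex_compact
  (continuous_subspaceT dist2_cont).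
have c_in : simplex c by rewrite -inE.
exists (comb c); split; first by apply/convhull_simplex; exists c.
move=> q /convhull_simplex[v v_simplex ->].
rewrite /enorm ler_sqrt ?dotv_ge0 //.
by have := c_min v; rewrite inE => /(_ v_simplex).
Qed.

End ProjectionExists.

Section LipschitzFamily.
Variables (R : realType) (n m : nat) (g : 'I_m -> 'rV[R]_n -> 'rV[R]_n) (Lj : 'I_m -> R).
Hypothesis g_lip : forall j, lipschitz_on_Rn (g j) (Lj j).

Lemma lipschitz_bigmax j x y :
  enorm (g j x - g j y) <= \big[Num.max/0]_(i < m) Lj i * enorm (x - y).
Proof.
apply: le_trans (g_lip j x y) _.
by apply: ler_wpM2r; [exact: enorm_ge0 | exact: le_bigmax].
Qed.

Lemma convhull_lipschitz_enorm_le z p : convhull (fun j => g j z) p ->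
  enorm p <= \big[Num.max/0]_(j < m) enorm (g j 0)
             + \big[Num.max/0]_(j < m) Lj j * enorm z.
Proof.
apply: convhull_enorm_le => j.
apply: le_trans (lipschitz_enorm_le z (g_lip j)) (lerD (le_bigmax _ _ _) _).
by apply: ler_wpM2r; [exact: enorm_ge0 | exact: le_bigmax].
Qed.

End LipschitzFamily.

Lemma sqrtr_linear_quadratic_le (R : realType) (a b e : R) :
  0 <= a -> 0 <= b -> 0 <= e ->
  Num.sqrt (a * e + b * e ^+ 2) <= Num.sqrt a * Num.sqrt e + Num.sqrt b * e.
Proof.
move=> a0 b0 e0.
have rhs_ge0 : 0 <= Num.sqrt a * Num.sqrt e + Num.sqrt b * e.
  by rewrite addr_ge0 ?mulr_ge0 ?sqrtr_ge0.
rewrite -(ger0_norm rhs_ge0) -sqrtr_sqr ler_sqrt ?sqr_ge0 //.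
rewrite sqrrD !exprMn !sqr_sqrtr // lerD2r lerDl.
by rewrite mulrn_wge0 // !mulr_ge0 ?sqrtr_ge0.
Qed.

Theorem mainTheorem4 (R : realType) (n m : nat) (hm : (0 < m)%N)
  (f : 'I_m -> 'rV[R]_n -> R) (g : 'I_m -> 'rV[R]_n -> 'rV[R]_n)
  (Lj : 'I_m -> R)
  (hgrad : forall j, is_gradient (f j) (g j))
  (hgcont : forall j, continuous (g j))
  (hL0 : forall j, 0 <= Lj j)
  (hLip : forall j, lipschitz_on_Rn (g j) (Lj j))
  (C1 tau : R) (hC1 : 0 < C1) (htau : 0 < tau)
  (x y : 'rV[R]_n) (hxy : enorm x + enorm y <= C1) :
  let L := \big[Num.max/0]_(j < m) Lj j in
  let C2 := L * C1 + 2 * \big[Num.max/0]_(j < m) enorm (g j 0) in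
  let Cset := fun z => convhull (fun j => g j z) in
  let w := tau^-1 *: (y - x) in
  enorm (projC (Cset y) w - projC (Cset x) w)
    <= Num.sqrt (C2 * L) * Num.sqrt (enorm (x - y))
       + Num.sqrt (3 * L / tau) * enorm (x - y).
Proof.
cbv zeta beta.
set L := \big[Num.max/0]_(j < m) Lj j.
set M := \big[Num.max/0]_(j < m) enorm (g j 0).
set C2 := L * C1 + 2 * M.
set w := tau^-1 *: (y - x).
set e := enorm (x - y).
have e_ge0 : 0 <= e by apply: enorm_ge0.
have L_ge0 : 0 <= L by apply: bigmax_ge_id.
have C2_ge0 : 0 <= C2 by rewrite addr_ge0 ?mulr_ge0 ?bigmax_ge_id // ltW.
have tauV_ge0 : 0 <= tau^-1 by rewrite invr_ge0 ltW.
have b_ge0 : 0 <= 3 * L / tau by rewrite !mulr_ge0.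
have proj_spec z :
    is_proj (convhull (fun j => g j z)) w (projC (convhull (fun j => g j z)) w).
  by apply: xgetPex; apply: is_proj_convhull_exists.
have dist_bound z :
    enorm (w - projC (convhull (fun j => g j z)) w) <= tau^-1 * e + (M + L * enorm z).
  have P_bound := convhull_lipschitz_enorm_le hLip (proj_spec z).1.
  apply: le_trans (enormB_le _ _) (lerD _ P_bound).
  by rewrite /w enormZ enormB -/e ger0_norm.
have := is_proj_convhull_stable (fun j => lipschitz_bigmax hLip j x y)
  (proj_spec y) (proj_spec x).
have := dist_bound x; have := dist_bound y.
set P := projC _ w; set Q := projC _ w => dP dQ stable.
have sqr_bound : dotv (P - Q) (P - Q) <= C2 * L * e + 3 * L / tau * e ^+ 2.
  apply: le_trans stable _.
  have LC1 : L * (enorm x + enorm y) <= L * C1 by apply: ler_wpM2l.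
  have : enorm (w - P) + enorm (w - Q) <= 2 * tau^-1 * e + C2 by rewrite /C2; lra.
  move/(ler_wpM2l (mulr_ge0 L_ge0 e_ge0)) => dist_sum; apply: le_trans dist_sum _.
  have : 0 <= L * tau^-1 * e ^+ 2 by rewrite !mulr_ge0 ?sqr_ge0.
  rewrite mulrDr; nra.
apply: le_trans (sqrtr_linear_quadratic_le (mulr_ge0 C2_ge0 L_ge0) b_ge0 e_ge0).
by rewrite ler_sqrt // addr_ge0 ?mulr_ge0 ?sqr_ge0.
Qed.
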